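(* The closure of the circuit graph, $\operatorname{cl}G_X(\mathcal{A})$, contains no lines.
   Context: $X\subset\mathbb{R}^n$ is a nonempty closed convex set and $\mathcal{A}\subset\mathbb{R}^n$ is a nonempty finite set such that the functions $x\mapsto\exp(\alpha^Tx)$, $\alpha\in\mathcal{A}$, are linearly independent on $X$. $\mathbb{R}^{\mathcal{A}}$ denotes real vectors indexed by $\mathcal{A}$. $\mathcal{A}\nu=\sum_\alpha\alpha\nu_\alpha$. $\sigma_X(y)=\sup\{y^Tx:x\in X\}$. $N_\beta=\{\nu\in\mathbb{R}^{\mathcal{A}}:\nu_\alpha\ge0\ \forall\alpha\neq\beta,\ \sum_\alpha\nu_\alpha=0\}$. A vector $\nu^\star\in N_\beta$ is an $X$-circuit of $\mathcal{A}$ if (1) $\nu^\star\neq0$, (2) $\sigma_X(-\mathcal{A}\nu^\star)<\infty$, and (3) $\nu^\star$ cannot be written as a convex combination of two non-proportional vectors $\nu^{(1)},\nu^{(2)}\in N_\beta$ such that the map $\nu\mapsto\sigma_X(-\mathcal{A}\nu)$ is affine on the segment $[\nu^{(1)},\nu^{(2)}]$. $\Lambda_X(\mathcal{A})$ is the set of all $X$-circuits $\lambda$ (over all $\beta\in\mathcal{A}$) normalized so that the unique negative entry equals $-1$. The functional form of $\lambda\in\Lambda_X(\mathcal{A})$ is $\phi_\lambda=(\lambda,\sigma_X(-\mathcal{A}\lambda))\in\mathbb{R}^{\mathcal{A}}\times\mathbb{R}$. The circuit graph is $G_X(\mathcal{A})=\operatorname{cone}(\{\phi_\lambda:\lambda\in\Lambda_X(\mathcal{A})\}\cup\{(0,1)\})\subset\mathbb{R}^{\mathcal{A}}\times\mathbb{R}$.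 *)

From HB Require Import structures.
From mathcomp Require Import all_boot all_order all_algebra.
From mathcomp Require Import all_classical all_reals all_analysis.
Set Implicit Arguments. Unset Strict Implicit. Unset Printing Implicit Defensive.
Import Order.TTheory GRing.Theory Num.Theory.
Import numFieldNormedType.Exports.
Local Open Scope classical_set_scope.
Local Open Scope ring_scope.

Section Defs.
Variable R : realType.
Variables (n m : nat).
(* The finite set A = {a i | i < m} of exponents in R^n; R^A = 'rV[R]_m. *)
Variable a : 'I_m -> 'rV[R]_n.
Variable X : set 'rV[R]_n.

Definition dotp (y x : 'rV[R]_n) : R := \sum_(k < n) y 0 k * x 0 k.

Definition convexR (S : set 'rV[R]_n) : Prop :=
  forall x y (t : R), S x -> S y -> 0 <= t -> t <= 1 -> S (t *: x + (1 - t) *: y).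

Definition Amul (nu : 'rV[R]_m) : 'rV[R]_n := \sum_(i < m) nu 0 i *: a i.

Definition sigmaX (y : 'rV[R]_n) : \bar R := ereal_sup [set (dotp y x)%:E | x in X].

Definition sigmaA (nu : 'rV[R]_m) : \bar R := sigmaX (- Amul nu).

Definition Nbeta (beta : 'I_m) : set 'rV[R]_m :=
  [set nu | (forall i, i != beta -> 0 <= nu 0 i) /\ \sum_(i < m) nu 0 i = 0].

Definition proportional (u v : 'rV[R]_m) : Prop :=
  exists c : R, u = c *: v \/ v = c *: u.

Definition affine_on_segment (nu1 nu2 : 'rV[R]_m) : Prop :=
  forall s : R, 0 <= s -> s <= 1 ->
    sigmaA ((1 - s) *: nu1 + s *: nu2) =
    ((1 - s)%:E * sigmaA nu1 + s%:E * sigmaA nu2)%E.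

Definition X_circuit (beta : 'I_m) (nu : 'rV[R]_m) : Prop :=
  [/\ Nbeta beta nu,
      nu != 0,
      (sigmaA nu < +oo)%E &
      ~ (exists nu1 nu2 (t : R),
           Nbeta beta nu1 /\ Nbeta beta nu2 /\ ~ proportional nu1 nu2 /\
           0 < t /\ t < 1 /\
           nu = t *: nu1 + (1 - t) *: nu2 /\
           affine_on_segment nu1 nu2)].

(* Lambda_X(A): circuits normalized so the unique negative entry is -1 *)
Definition LambdaX : set 'rV[R]_m :=
  [set lam | exists beta, X_circuit beta lam /\ lam 0 beta = -1].

Definition phi (lam : 'rV[R]_m) : 'rV[R]_m * R := (lam, fine (sigmaA lam)).

End Defs.

Definition conic_hull (R : realType) (V : lmodType R) (S : set V) : set V :=
  [set v | exists (k : nat) (c : 'I_k -> R) (s : 'I_k -> V),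
      (forall i, 0 <= c i) /\ (forall i, S (s i)) /\ v = \sum_(i < k) c i *: s i].

Definition circuit_graph (R : realType) (n m : nat) (a : 'I_m -> 'rV[R]_n)
    (X : set 'rV[R]_n) : set ('rV[R]_m * R) :=
  conic_hull ((phi a X @` LambdaX a X) `|` [set ((0 : 'rV[R]_m), (1 : R))]).

(* The proof exhibits a linear functional L(lam, s) = c s + w . lam on
   R^A x R dominating every coordinate of every generator of G_X(A) up to a
   fixed factor eps > 0.  All perturbations of L by +-eps in a single
   coordinate then remain nonnegative on the generators, hence on the closed
   cone they span; a functional nonnegative along a whole line vanishes on its
   direction, so every coordinate of that direction is zero
   (closure_cone_no_line).

   To build L, note that for a normalized circuit lam (lam_beta = -1) with
   s = sigma_X(-A lam), the gap G(x) = s + (A lam)^T x is nonnegative on X.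
   Linear independence of the exponentials yields, for every pair of
   exponents alpha_i != alpha_j, two points of X along which alpha_i - alpha_j
   is not constant.  Evaluating G at these test points with suitable weights
   and adding the strictly convex term sum_i |incr_i|^2 lam_i gives a
   functional exceeding G(x0) by a uniform del > 0 on all circuits
   (lin_witness_ge), from which the domination estimates follow. *)

From HB Require Import structures.
From mathcomp Require Import all_boot all_order all_algebra.
From mathcomp Require Import all_classical all_reals all_analysis.
From mathcomp Require Import ring lra.
Import Order.TTheory GRing.Theory Num.Theory.
Import numFieldNormedType.Exports.
Local Open Scope classical_set_scope.
Local Open Scope ring_scope.
Set Implicit Arguments. Unset Strict Implicit. Unset Printing Implicit Defensive.

Section LinearFunctionals.
Variables (R : realType) (m : nat).

Definition lin (w : 'I_m -> R) (c : R) (q : 'rV[R]_m * R) : R :=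
  c * q.2 + \sum_(i < m) w i * q.1 0 i.

Lemma lin_continuous w c : continuous (lin w c).
Proof.
have coord i : continuous (fun q : 'rV[R]_m * R => q.1 0 i).
  move=> q; apply: (@cvg_comp _ _ _ fst (fun M : 'rV[R]_m => M 0 i)).
    exact: cvg_fst.
  exact: coord_continuous.
move=> q; apply: cvgD; first by apply: cvgM; [exact: cvg_cst | exact: cvg_snd].
apply: (continuous_big (@add_continuous R^o)) => i _ {}q.
by apply: cvgM; [exact: cvg_cst | exact: coord].
Qed.

Lemma linD w c : {morph lin w c : x y / x + y}.
Proof.
move=> x y; rewrite /lin /= mulrDr.
under eq_bigr do rewrite mxE mulrDr.
by rewrite big_split /=; lra.
Qed.

Lemma linZ w c k x : lin w c (k *: x) = k * lin w c x.
Proof.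
rewrite /lin /= mulrDr mulr_sumr mulrCA.
by congr (_ + _); apply: eq_bigr => i _; rewrite mxE mulrCA.
Qed.

Lemma lin_ge0_closure_cone w c (S : set ('rV[R]_m * R)) :
  (forall g, S g -> 0 <= lin w c g) ->
  closure (conic_hull S) `<=` [set q | 0 <= lin w c q].
Proof.
move=> S_ge0.
have closed_halfspace : closed [set q | 0 <= lin w c q].
  apply: (@preimage_closed _ _ (lin w c) [set x | 0 <= x]); last exact: closed_ge.
  by move=> q _; exact: lin_continuous.
rewrite [X in _ `<=` X](closure_id _).1 //; apply: closureS.
move=> _ [k [coef [s [coef_ge0 [Ss ->]]]]] /=.
elim/big_ind: _ => [|x y x_ge0 y_ge0|i _].
- by rewrite -[X in lin _ _ X](scale0r 0) linZ mul0r.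
- by rewrite linD addr_ge0.
- by rewrite linZ mulr_ge0 ?S_ge0.
Qed.

Lemma lin_line_vanish w c p d :
  (forall t : R, 0 <= lin w c (p + t *: d)) -> lin w c d = 0.
Proof.
move=> line_ge0; apply/eqP; apply/negPn/negP => d_neq0.
have := line_ge0 (- (lin w c p + 1) / lin w c d).
by rewrite linD linZ mulrAC -mulrA divff // mulr1; lra.
Qed.

Lemma lin_perturb_coord w c (j : 'I_m) e q :
  lin (fun i => w i + e * (i == j)%:R) c q = lin w c q + e * q.1 0 j.
Proof.
rewrite /lin; under eq_bigr do rewrite mulrDl.
rewrite big_split /=.
have -> : \sum_(i < m) e * (i == j)%:R * q.1 0 i = e * q.1 0 j.
  rewrite (bigD1 j) //= eqxx mulr1 big1 ?addr0 // => i /negPf ->.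
  by rewrite mulr0 mul0r.
ring.
Qed.

Lemma lin_perturb_last w c e q : lin w (c + e) q = lin w c q + e * q.2.
Proof. by rewrite /lin; ring. Qed.

Lemma dominated_perturbation_ge0 (eps e x L : R) :
  `|e| <= eps -> eps * `|x| <= L -> 0 <= L + e * x.
Proof.
move=> e_le eps_x_le.
have : `|e * x| <= eps * `|x| by rewrite normrM ler_wpM2r.
by have := ler_norm (- (e * x)); rewrite normrN; lra.
Qed.

Lemma opposite_perturbations_zero (eps L x : R) :
  0 < eps -> L + eps * x = 0 -> L + - eps * x = 0 -> x = 0.
Proof.
move=> eps_gt0 h1 h2; have /eqP : eps * x = 0 by lra.
by rewrite mulf_eq0 gt_eqF //= => /eqP.
Qed.

Theorem closure_cone_no_line (S : set ('rV[R]_m * R)) w c (eps : R) :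
  0 < eps ->
  (forall g j, S g -> eps * `|g.1 0 j| <= lin w c g) ->
  (forall g, S g -> eps * `|g.2| <= lin w c g) ->
  ~ (exists p d, d != 0 /\ forall t : R, closure (conic_hull S) (p + t *: d)).
Proof.
move=> eps_gt0 dom_coord dom_last [p [d [d_neq0 line]]].
have vanish w' c' : (forall g, S g -> 0 <= lin w' c' g) -> lin w' c' d = 0.
  by move=> S_ge0; apply: (@lin_line_vanish _ _ p) => t;
     apply: (lin_ge0_closure_cone S_ge0); exact: line.
have coord0 j : d.1 0 j = 0.
  have pert e : `|e| <= eps -> lin w c d + e * d.1 0 j = 0.
    move=> e_le; rewrite -lin_perturb_coord; apply: vanish => g Sg.
    by rewrite lin_perturb_coord (dominated_perturbation_ge0 e_le) ?dom_coord.
  by apply: (opposite_perturbations_zero eps_gt0); apply: pert;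
     rewrite ?normrN gtr0_norm.
have last0 : d.2 = 0.
  have pert e : `|e| <= eps -> lin w c d + e * d.2 = 0.
    move=> e_le; rewrite -lin_perturb_last; apply: vanish => g Sg.
    by rewrite lin_perturb_last (dominated_perturbation_ge0 e_le) ?dom_last.
  by apply: (opposite_perturbations_zero eps_gt0); apply: pert;
     rewrite ?normrN gtr0_norm.
move: d_neq0; clear vanish line; case: d coord0 last0 => d1 d2 /= coord0 ->.
suff -> : d1 = 0 by rewrite eqxx.
by apply/rowP => j; rewrite coord0 mxE.
Qed.

End LinearFunctionals.

Section CircuitGenerators.
Variables (R : realType) (n m : nat) (a : 'I_m -> 'rV[R]_n) (X : set 'rV[R]_n).

Lemma dotp_Amul lam x :
  dotp (- Amul a lam) x = - \sum_(i < m) lam 0 i * dotp (a i) x.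
Proof.
rewrite /dotp /Amul.
under eq_bigr do rewrite !mxE summxE mulNr mulr_suml.
rewrite sumrN exchange_big /=; congr (- _); apply: eq_bigr => i _.
by rewrite mulr_sumr; apply: eq_bigr => k _; rewrite mxE mulrA.
Qed.

(* The affine function x |-> s + (A lam)^T x; for s = sigma_X(-A lam) it is
   nonnegative on X, which is all we use about the value of the support
   function on a circuit. *)
Definition circuit_gap (lam : 'rV[R]_m) (s : R) (x : 'rV[R]_n) : R :=
  s + \sum_(i < m) lam 0 i * dotp (a i) x.

Lemma circuit_gap_ge0 lam x : (sigmaA a X lam < +oo)%E -> X x ->
  0 <= circuit_gap lam (fine (sigmaA a X lam)) x.
Proof.
move=> sigma_fin Xx.
have : ((dotp (- Amul a lam) x)%:E <= sigmaA a X lam)%E.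
  by apply: ereal_sup_ubound; exists x.
move: sigma_fin; rewrite dotp_Amul /circuit_gap.
by case: (sigmaA a X lam) => [r| |] //= _; rewrite lee_fin; lra.
Qed.

Lemma normalized_sum_off beta (lam : 'rV[R]_m) :
  Nbeta beta lam -> lam 0 beta = -1 -> \sum_(i < m | i != beta) lam 0 i = 1.
Proof.
by move=> [_ sum0] lam_beta; move: sum0; rewrite (bigD1 beta) //= lam_beta; lra.
Qed.

Lemma normalized_entry_le1 beta (lam : 'rV[R]_m) :
  Nbeta beta lam -> lam 0 beta = -1 -> forall j, `|lam 0 j| <= 1.
Proof.
move=> Nlam lam_beta j; case: (eqVneq j beta) => [->|j_neq].
  by rewrite lam_beta normrN normr1.
have [lam_ge0 _] := Nlam; rewrite ger0_norm ?lam_ge0 //.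
rewrite -(normalized_sum_off Nlam lam_beta) (bigD1 j) //= lerDl.
by apply: sumr_ge0 => i /andP [i_neq _]; exact: lam_ge0.
Qed.

Lemma offset_le_gap (lam : 'rV[R]_m) (s : R) x :
  (forall i, `|lam 0 i| <= 1) -> 0 <= circuit_gap lam s x ->
  `|s| <= circuit_gap lam s x + \sum_(i < m) `|dotp (a i) x|.
Proof.
move=> lam_le1 gap_ge0.
have {1}-> : s = circuit_gap lam s x - \sum_(i < m) lam 0 i * dotp (a i) x.
  by rewrite /circuit_gap; ring.
apply: (le_trans (ler_normB _ _)); rewrite ger0_norm // lerD2l.
apply: (le_trans (ler_norm_sum _ _ _)); apply: ler_sum => i _.
by rewrite normrM ler_piMl.
Qed.

Lemma exp_independence_separates (x0 : 'rV[R]_n) : X x0 ->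
  (forall c : 'I_m -> R,
     (forall x, X x -> \sum_(i < m) c i * expR (dotp (a i) x) = 0) ->
     forall i, c i = 0) ->
  forall i j : 'I_m, i != j -> exists p q, X p /\ X q /\
    (dotp (a i) p - dotp (a i) q) - (dotp (a j) p - dotp (a j) q) != 0.
Proof.
move=> Xx0 indep i j i_neq_j; apply: contrapT => no_sep.
pose k := dotp (a i) x0 - dotp (a j) x0.
have shift x : X x -> dotp (a i) x = k + dotp (a j) x.
  move=> Xx; apply: contrapT => neq; apply: no_sep; exists x, x0.
  by split=> //; split=> //; apply/eqP; rewrite /k in neq; lra.
pose c l : R := (l == i)%:R - (l == j)%:R * expR k.
have : c i = 0.
  apply: indep => x Xx; under eq_bigr do rewrite mulrBl.
  rewrite sumrB (bigD1 i) //= eqxx mul1r big1; last first.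
    by move=> l /negPf ->; rewrite mul0r.
  rewrite (bigD1 j) //= eqxx mul1r big1; last first.
    by move=> l /negPf ->; rewrite !mul0r.
  by rewrite shift // expRD !addr0 subrr.
by rewrite /c eqxx (negPf i_neq_j) mul0r subr0 => /eqP; rewrite oner_eq0.
Qed.

End CircuitGenerators.

Section WitnessFunctional.
Variables (R : realType) (n m : nat) (a : 'I_m -> 'rV[R]_n).
Variable P : 'I_m * 'I_m -> 'rV[R]_n * 'rV[R]_n.

Definition incr (l : 'I_m) k : R := dotp (a l) (P k).1 - dotp (a l) (P k).2.
(* weight of the k-th pair, large enough to absorb the cross terms *)
Definition pair_weight k : R := 2 * \sum_(l < m) `|incr l k|.
Definition incr_sq (i : 'I_m) : R := \sum_(k : 'I_m * 'I_m) incr i k ^+ 2.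
(* squared distance between the increment profiles of alpha_i and alpha_j;
   it is positive when the pairs separate alpha_i from alpha_j *)
Definition spread (i j : 'I_m) : R :=
  \sum_(k : 'I_m * 'I_m) (incr i k - incr j k) ^+ 2.

Variable x0 : 'rV[R]_n.

Definition witness_w (i : 'I_m) : R := dotp (a i) x0 +
  \sum_(k : 'I_m * 'I_m)
    pair_weight k * (dotp (a i) (P k).1 + dotp (a i) (P k).2) + incr_sq i.
Definition witness_c : R := 1 + \sum_(k : 'I_m * 'I_m) 2 * pair_weight k.

Lemma lin_witness (lam : 'rV[R]_m) (s : R) :
  lin witness_w witness_c (lam, s) = circuit_gap a lam s x0 +
  \sum_(k : 'I_m * 'I_m) pair_weight k *
      (circuit_gap a lam s (P k).1 + circuit_gap a lam s (P k).2)
  + \sum_(i < m) incr_sq i * lam 0 i.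
Proof.
rewrite /lin /= /witness_w /witness_c /circuit_gap.
under eq_bigr do rewrite !mulrDl.
rewrite !big_split /=.
have weighted : \sum_(i < m) (\sum_(k : 'I_m * 'I_m) pair_weight k *
      (dotp (a i) (P k).1 + dotp (a i) (P k).2)) * lam 0 i =
    \sum_(k : 'I_m * 'I_m) pair_weight k *
      (\sum_(i < m) lam 0 i * dotp (a i) (P k).1 +
       \sum_(i < m) lam 0 i * dotp (a i) (P k).2).
  under eq_bigr do rewrite mulr_suml.
  rewrite exchange_big /=; apply: eq_bigr => k _.
  by rewrite -big_split /= mulr_sumr; apply: eq_bigr => i _; ring.
have offsets : \sum_(k : 'I_m * 'I_m) pair_weight k *
    (s + \sum_(i < m) lam 0 i * dotp (a i) (P k).1 +
     (s + \sum_(i < m) lam 0 i * dotp (a i) (P k).2)) =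
    s * \sum_(k : 'I_m * 'I_m) 2 * pair_weight k +
    \sum_(k : 'I_m * 'I_m) pair_weight k *
      (\sum_(i < m) lam 0 i * dotp (a i) (P k).1 +
       \sum_(i < m) lam 0 i * dotp (a i) (P k).2).
  by rewrite mulr_sumr -big_split /=; apply: eq_bigr => k _; ring.
have base : \sum_(i < m) dotp (a i) x0 * lam 0 i =
    \sum_(i < m) lam 0 i * dotp (a i) x0.
  by apply: eq_bigr => i _; rewrite mulrC.
rewrite weighted offsets base; ring.
Qed.

Section LowerBound.
Variables (beta : 'I_m) (lam : 'rV[R]_m) (s : R).
Hypotheses (Nlam : Nbeta beta lam) (lam_beta : lam 0 beta = -1).

Lemma sum_incr k : \sum_(i < m) lam 0 i * incr i k =
  circuit_gap a lam s (P k).1 - circuit_gap a lam s (P k).2.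
Proof.
rewrite /circuit_gap /incr; under eq_bigr do rewrite mulrBr.
by rewrite sumrB; ring.
Qed.

(* Recentring the squares at beta, using sum_i lam_i = 0. *)
Lemma incr_sq_recentre k : \sum_(i < m) lam 0 i * incr i k ^+ 2 =
  \sum_(i < m) lam 0 i * (incr i k - incr beta k) ^+ 2 +
  2 * incr beta k * (circuit_gap a lam s (P k).1 - circuit_gap a lam s (P k).2).
Proof.
have [_ sum0] := Nlam.
rewrite -sum_incr.
have expand i : lam 0 i * (incr i k - incr beta k) ^+ 2 = lam 0 i * incr i k ^+ 2
    - 2 * incr beta k * (lam 0 i * incr i k) + incr beta k ^+ 2 * lam 0 i.
  by ring.
under [X in _ = X + _]eq_bigr do rewrite expand.
by rewrite big_split sumrB /= -!mulr_sumr sum0 mulr0 addr0; ring.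
Qed.

Variable del : R.
Hypotheses (gap_ge0 : forall k, 0 <= circuit_gap a lam s (P k).1 /\
                                 0 <= circuit_gap a lam s (P k).2)
           (spread_ge : forall i, i != beta -> del <= spread i beta).

Lemma lin_witness_ge :
  circuit_gap a lam s x0 + del <= lin witness_w witness_c (lam, s).
Proof.
rewrite lin_witness.
have -> : \sum_(i < m) incr_sq i * lam 0 i = \sum_(k : 'I_m * 'I_m)
    (\sum_(i < m) lam 0 i * (incr i k - incr beta k) ^+ 2 + 2 * incr beta k *
      (circuit_gap a lam s (P k).1 - circuit_gap a lam s (P k).2)).
  rewrite /incr_sq; under eq_bigr do rewrite mulr_suml.
  rewrite exchange_big /=; apply: eq_bigr => k _.
  by rewrite -incr_sq_recentre; apply: eq_bigr => i _; rewrite mulrC.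
rewrite big_split /=.
have cross_ge0 : 0 <= \sum_(k : 'I_m * 'I_m) pair_weight k *
      (circuit_gap a lam s (P k).1 + circuit_gap a lam s (P k).2) +
    \sum_(k : 'I_m * 'I_m) 2 * incr beta k *
      (circuit_gap a lam s (P k).1 - circuit_gap a lam s (P k).2).
  rewrite -big_split /=; apply: sumr_ge0 => k _.
  have : `|incr beta k| <= \sum_(l < m) `|incr l k|.
    by rewrite (bigD1 beta) //= lerDl; apply: sumr_ge0.
  rewrite ler_norml => /andP [lo hi]; have [g1 g2] := gap_ge0 k.
  by rewrite /pair_weight; nra.
have square_ge : del <= \sum_(k : 'I_m * 'I_m)
    \sum_(i < m) lam 0 i * (incr i k - incr beta k) ^+ 2.
  have [lam_ge0 _] := Nlam.
  rewrite exchange_big /=; under eq_bigr do rewrite -mulr_sumr.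
  rewrite (bigD1 beta) //= big1 ?mulr0 ?add0r; last first.
    by move=> k _; rewrite subrr expr0n.
  rewrite -[del]mul1r -(normalized_sum_off Nlam lam_beta) mulr_suml.
  apply: ler_sum => i i_neq.
  by apply: ler_wpM2l; [exact: lam_ge0 | exact: spread_ge].
lra.
Qed.

End LowerBound.
End WitnessFunctional.

Lemma finite_positive_lower_bound (R : realFieldType) (T : finType)
    (D : pred T) (f : T -> R) :
  (forall t, D t -> 0 < f t) ->
  exists del : R, [/\ 0 < del, del <= 1 & forall t, D t -> del <= f t].
Proof.
move=> f_gt0; exists (\big[Order.min/1]_(t | D t) f t); split.
- by apply: lt_bigmin => // t /f_gt0.
- exact: bigmin_le_id.
- by move=> t Dt; exact: bigmin_le_cond.
Qed.

Section Domination.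
Variables (R : realType) (n m : nat) (a : 'I_m -> 'rV[R]_n) (X : set 'rV[R]_n).

Definition circuit_generators : set ('rV[R]_m * R) :=
  phi a X @` LambdaX a X `|` [set ((0 : 'rV[R]_m), (1 : R))].

Lemma separating_pairs (x0 : 'rV[R]_n) : X x0 ->
  (forall c : 'I_m -> R,
     (forall x, X x -> \sum_(i < m) c i * expR (dotp (a i) x) = 0) ->
     forall i, c i = 0) ->
  exists P : 'I_m * 'I_m -> 'rV[R]_n * 'rV[R]_n,
    (forall k, X (P k).1 /\ X (P k).2) /\
    forall i j, i != j -> 0 < spread a P i j.
Proof.
move=> Xx0 indep.
have : forall k : 'I_m * 'I_m, exists pq : 'rV[R]_n * 'rV[R]_n,
    [/\ X pq.1, X pq.2 & k.1 != k.2 ->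
      (dotp (a k.1) pq.1 - dotp (a k.1) pq.2) -
      (dotp (a k.2) pq.1 - dotp (a k.2) pq.2) != 0].
  move=> [i j] /=; case: (eqVneq i j) => [_|i_neq_j]; first by exists (x0, x0).
  have [p [q [Xp [Xq sep]]]] := exp_independence_separates Xx0 indep i_neq_j.
  by exists (p, q).
move=> /choice [P PP]; exists P; split=> [k|i j i_neq_j].
  by have [] := PP k.
have [_ _ /(_ i_neq_j) sep] := PP (i, j).
apply: (@lt_le_trans _ _ ((incr a P i (i, j) - incr a P j (i, j)) ^+ 2)).
  by rewrite lt_neqAle sqr_ge0 andbT eq_sym sqrf_eq0.
rewrite /spread (bigD1 (i, j)) //= lerDl.
by apply: sumr_ge0 => k _; exact: sqr_ge0.
Qed.

Variables (x0 : 'rV[R]_n) (P : 'I_m * 'I_m -> 'rV[R]_n * 'rV[R]_n) (del : R).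
Hypotheses (Xx0 : X x0) (XP : forall k, X (P k).1 /\ X (P k).2).
Hypotheses (del_gt0 : 0 < del) (del_le1 : del <= 1)
           (spread_ge : forall i j, i != j -> del <= spread a P i j).

Let L := lin (witness_w a P x0) (witness_c a P).
Let C0 : R := \sum_(i < m) `|dotp (a i) x0|.
(* the domination constant; eps <= del and eps * C0 <= del *)
Let eps : R := del / (1 + C0).

Let C0_ge0 : 0 <= C0. Proof. by apply: sumr_ge0. Qed.
Let eps_gt0 : 0 < eps. Proof. by rewrite divr_gt0 // ltr_pwDl. Qed.
Let eps_def : eps * (1 + C0) = del.
Proof. by rewrite /eps mulfVK // gt_eqF // ltr_pwDl. Qed.

Let eps_le_del : eps <= del.
Proof. by rewrite -eps_def; apply: ler_peMr; [exact: ltW | rewrite lerDl]. Qed.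
Let eps_C0_le_del : eps * C0 <= del.
Proof. by rewrite -eps_def; apply: ler_wpM2l; [exact: ltW | rewrite lerDr]. Qed.

Lemma unit_generator_dominated :
  (forall j, eps * `|(0 : 'rV[R]_m) 0 j| <= L (0, 1)) /\ eps * `|1| <= L (0, 1).
Proof.
have L01 : L (0, 1) = witness_c a P.
  by rewrite /L /lin /= big1 ?addr0 ?mulr1 // => i _; rewrite mxE mulr0.
have c_ge1 : 1 <= witness_c a P.
  rewrite /witness_c lerDl; apply: sumr_ge0 => k _; rewrite mulr_ge0 //.
  by rewrite mulr_ge0 //; apply: sumr_ge0.
rewrite L01 normr1 mulr1; split=> [j|].
  by rewrite mxE normr0 mulr0 (le_trans ler01).
by rewrite (le_trans eps_le_del) // (le_trans del_le1).
Qed.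

Lemma circuit_generator_dominated lam : LambdaX a X lam ->
  (forall j, eps * `|lam 0 j| <= L (phi a X lam)) /\
  eps * `|(phi a X lam).2| <= L (phi a X lam).
Proof.
move=> [beta [[Nlam _ sigma_fin _] lam_beta]].
set s := fine (sigmaA a X lam).
have gap_ge0 x : X x -> 0 <= circuit_gap a lam s x by exact: circuit_gap_ge0.
have L_ge : circuit_gap a lam s x0 + del <= L (lam, s).
  apply: (lin_witness_ge x0 Nlam lam_beta) => [k|i i_neq].
    by have [X1 X2] := XP k; split; apply: gap_ge0.
  exact: spread_ge.
have lam_le1 := normalized_entry_le1 Nlam lam_beta.
have gap0_ge0 := gap_ge0 _ Xx0.
have eps_le1 : eps <= 1 := le_trans eps_le_del del_le1.
rewrite /phi /= -/s; split=> [j|].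
  apply: (le_trans _ L_ge); apply: (le_trans _ (le_trans eps_le_del _)).
    exact: ler_piMr (ltW eps_gt0) (lam_le1 j).
  by rewrite lerDr.
have s_le := offset_le_gap lam_le1 gap0_ge0.
have : eps * `|s| <= eps * circuit_gap a lam s x0 + eps * C0.
  by rewrite -mulrDr ler_pM2l.
have : eps * circuit_gap a lam s x0 <= circuit_gap a lam s x0.
  exact: ler_piMl gap0_ge0 eps_le1.
by move: L_ge eps_C0_le_del; lra.
Qed.

Lemma generators_dominated : exists w c (e : R), [/\ 0 < e,
  forall g j, circuit_generators g -> e * `|g.1 0 j| <= lin w c g &
  forall g, circuit_generators g -> e * `|g.2| <= lin w c g].
Proof.
exists (witness_w a P x0), (witness_c a P), eps; split=> // [g j|g].
  by case=> [[lam Llam <-]|->]; [exact: (circuit_generator_dominated Llam).1 |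
                                 exact: unit_generator_dominated.1].
by case=> [[lam Llam <-]|->]; [exact: (circuit_generator_dominated Llam).2 |
                               exact: unit_generator_dominated.2].
Qed.

End Domination.

Unset Implicit Arguments.
Theorem lemma5p10 (R : realType) (n m : nat) (a : 'I_m -> 'rV[R]_n)
    (X : set 'rV[R]_n) :
  X !=set0 -> closed X -> convexR X ->
  (0 < m)%N ->
  (forall c : 'I_m -> R,
     (forall x, X x -> \sum_(i < m) c i * expR (dotp (a i) x) = 0) ->
     forall i, c i = 0) ->
  ~ (exists (p d : 'rV[R]_m * R), d != 0 /\
       forall t : R, closure (circuit_graph a X) (p + t *: d)).
Proof.
move=> [x0 Xx0] _ _ _ indep.
have [P [XP spread_gt0]] := separating_pairs Xx0 indep.
have [del [del_gt0 del_le1 del_le_spread]] :=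
  finite_positive_lower_bound (fun k : 'I_m * 'I_m => spread_gt0 k.1 k.2).
have [w [c [eps [eps_gt0 dom_coord dom_last]]]] :=
  generators_dominated Xx0 XP del_gt0 del_le1 (fun i j => del_le_spread (i, j)).
exact: closure_cone_no_line eps_gt0 dom_coord dom_last.
Qed.
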